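(* Let $[a,b]$ be a bounded interval, $n\ge2$ an integer, $h=(b-a)/n$, $x_k=a+kh$ ($0\le k\le n$), and let $X_n$ be the real vector space of maps $f:\{x_0,\ldots,x_n\}\to\mathbb R$. Let $s\ge0$, $\delta>0$, $0<c<1$, $M_0>0$, $C\ge0$, and let $N$ be a positive integer or $N=\infty$. For $1\le j\le N$ let $\theta_j:[a,b]\to[a,b]$ be Lipschitz with $\mathrm{Lip}(\theta_j)\le c$, let $\beta_j\in K_{M_0}\setminus\{0\}$, and let $C_j\in\mathbb R$ with $|C_j|\le C$. Define $\hat\beta_{j,s}\in X_n$ by $\hat\beta_{j,s}(x_k)=[1+\tfrac12C_jQ(\theta_j(x_k))][\beta_j(x_k)]^s$ and $L_{j,s}:X_n\to X_n$ by $(L_{j,s}f)(x_k)=\hat\beta_{j,s}(x_k)f^I(\theta_j(x_k))$. If $N=\infty$, assume there exists $k_0$ with $0\le k_0\le n$ such that $\sum_{j=1}^\infty\hat\beta_{j,s}(x_{k_0})<\infty$. Let $L_s=\sum_{j=1}^NL_{j,s}$. Assume $h\le1$, $Ch/4\le1$, and with $M_2=[sM_0+(1+h)/2]+\delta$ assume $\exp(-M_2h)\ge(1+c)/2$; let $M\in\mathbb R$ satisfy $\exp(Mh)\ge2$. Then $L_s(K_M\setminus\{0\})\subset K_{M-\delta}\setminus\{0\}$.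
   Context: For $f\in X_n$, $f^I:[a,b]\to\mathbb R$ is its piecewise linear interpolant: $f^I(x)=\frac{x-x_j}{h}f(x_{j+1})+\frac{x_{j+1}-x}{h}f(x_j)$ for $x_j\le x\le x_{j+1}$. For $M>0$, $K_M=\{f\in X_n: f(x_{j+1})\le f(x_j)e^{Mh}\text{ and }f(x_j)\le f(x_{j+1})e^{Mh},\ 0\le j<n\}$. $Q:[a,b]\to[0,h^2/4]$ is $Q(u)=(x_{j+1}-u)(u-x_j)$ for $x_j\le u\le x_{j+1}$. *)

From Stdlib Require Import Reals.
From Coquelicot Require Import Coquelicot.
Open Scope R_scope.

(* Grid on [a,b]: h = (b-a)/n, x_k = a + k h.  Elements of X_n are
   represented by functions nat -> R, only the values at 0..n matter. *)
Definition hstep (a b : R) (n : nat) : R := (b - a) / INR n.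
Definition node (a b : R) (n : nat) (k : nat) : R := a + INR k * hstep a b n.

(* index j with x_j <= u <= x_{j+1} (for u in [a,b]); j = n-1 at u = b *)
Definition idx (a b : R) (n : nat) (u : R) : nat :=
  Nat.min (Z.to_nat (Int_part ((u - a) / hstep a b n))) (n - 1).

Definition interp (a b : R) (n : nat) (f : nat -> R) (u : R) : R :=
  let j := idx a b n u in
  (u - node a b n j) / hstep a b n * f (S j)
  + (node a b n (S j) - u) / hstep a b n * f j.

Definition Qfun (a b : R) (n : nat) (u : R) : R :=
  let j := idx a b n u in (node a b n (S j) - u) * (u - node a b n j).

Definition inK (a b : R) (n : nat) (M : R) (f : nat -> R) : Prop :=
  forall j : nat, (j < n)%nat ->
    f (S j) <= f j * exp (M * hstep a b n) /\
    f j <= f (S j) * exp (M * hstep a b n).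

Definition nonzeroX (n : nat) (f : nat -> R) : Prop :=
  exists k : nat, (k <= n)%nat /\ f k <> 0.

Definition inKstar (a b : R) (n : nat) (M : R) (f : nat -> R) : Prop :=
  inK a b n M f /\ nonzeroX n f.

(* N : option nat, None encodes N = infinity; j ranges over 1 <= j <= N *)
Definition in_range (N : option nat) (j : nat) : Prop :=
  (1 <= j)%nat /\ match N with Some m => (j <= m)%nat | None => True end.

Definition betahat (a b : R) (n : nat) (s : R) (th : R -> R) (Cj : R)
  (bj : nat -> R) (k : nat) : R :=
  (1 + / 2 * Cj * Qfun a b n (th (node a b n k))) * Rpower (bj k) s.

Definition Lterm (a b : R) (n : nat) (s : R) (th : nat -> R -> R)
  (Cs : nat -> R) (beta : nat -> nat -> R) (f : nat -> R) (j k : nat) : R :=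
  betahat a b n s (th j) (Cs j) (beta j) k * interp a b n f (th j (node a b n k)).

Definition Ls (a b : R) (n : nat) (s : R) (N : option nat) (th : nat -> R -> R)
  (Cs : nat -> R) (beta : nat -> nat -> R) (f : nat -> R) (k : nat) : R :=
  match N with
  | Some m => sum_n_m (fun j => Lterm a b n s th Cs beta f j k) 1 m
  | None => Series (fun j => Lterm a b n s th Cs beta f (S j) k)
  end.

(* Every term L_{j,s} f is positive at the nodes, and between adjacent nodes its values
   differ by a factor at most exp((M - delta) h): the factor 1 + C_j Q / 2 changes by at most
   1 / (1 - h/2) since 0 <= Q <= h^2 / 4 and C h <= 4; the factor beta_j^s changes by at most
   exp(s M0 h) since beta_j lies in K_{M0}; and theta_j moves adjacent nodes to points at
   distance at most c h < h, where the interpolant of f in K_M changes by at most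
   1 + (exp(M h) - 1) c.  The choice of M_2 makes the product of these three factors at most
   exp((M - delta) h).  The bound passes to finite sums and, when N is infinite, to the series,
   which converge by comparison with the series of hat beta_{j,s}(x_{k0}), since values of
   beta_j, and of f, at different nodes differ by a bounded factor. *)

From Pilot Require Import Defs.
From Stdlib Require Import Reals ZArith Lra Lia Psatz.
From Coquelicot Require Import Coquelicot.
Open Scope R_scope.
(* Coquelicot loads ssreflect, which switches bullets off. *)
Set Bullet Behavior "Strict Subproofs".

Lemma lerp_ratio_same_cell p q t1 t2 c E : 0 < p -> 0 < q -> q <= p * E -> p <= q * E ->
  0 <= t1 <= 1 -> 0 <= t2 <= 1 -> Rabs (t1 - t2) <= c -> 1 <= E ->
  t1 * q + (1 - t1) * p <= (1 + (E - 1) * c) * (t2 * q + (1 - t2) * p).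
Proof.
  intros Hp Hq Hqp Hpq Ht1 Ht2 Ht HE.
  set (m := t2 * q + (1 - t2) * p).
  assert (Hm : Rmin p q <= m) by (unfold m, Rmin; destruct Rle_dec; nra).
  assert (Hjump : Rabs (q - p) <= (E - 1) * Rmin p q)
    by (unfold Rmin; destruct Rle_dec; apply Rabs_le_between; nra).
  assert (Hmin : 0 < Rmin p q) by (apply Rmin_pos; lra).
  assert (Hc : 0 <= c) by (pose proof (Rabs_pos (t1 - t2)); lra).
  assert (Hd : (t1 - t2) * (q - p) <= c * ((E - 1) * Rmin p q)).
  { eapply Rle_trans; [apply Rle_abs|]. rewrite Rabs_mult.
    apply Rmult_le_compat; auto using Rabs_pos. }
  assert (c * (E - 1) * Rmin p q <= c * (E - 1) * m)
    by (apply Rmult_le_compat_l; [apply Rmult_le_pos|]; lra).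
  replace (t1 * q + (1 - t1) * p) with (m + (t1 - t2) * (q - p)) by (unfold m; ring).
  nra.
Qed.

(* Interpolation on the two cells meeting at a node with value [q]: [v] is at relative
   distance [s1] from the node, [u] at [s2] on the other side. *)
Lemma lerp_ratio_across_node p q r s1 s2 c E : 0 <= p -> 0 < q -> q <= p * E -> r <= q * E ->
  0 <= s1 <= 1 -> 0 <= s2 -> s1 + s2 <= c -> c < 1 -> 1 <= E ->
  s2 * r + (1 - s2) * q <= (1 + (E - 1) * c) * (s1 * p + (1 - s1) * q).
Proof.
  intros Hp Hq Hqp Hrq Hs1 Hs2 Hc Hc1 HE.
  assert (Hu : s2 * r + (1 - s2) * q <= q * (1 + (c - s1) * (E - 1))).
  { assert (s2 * r <= s2 * (q * E)) by (apply Rmult_le_compat_l; lra).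
    assert (s2 * (q * (E - 1)) <= (c - s1) * (q * (E - 1)))
      by (apply Rmult_le_compat_r; [apply Rmult_le_pos|]; lra).
    nra. }
  assert (Hv : q * (E - s1 * (E - 1)) <= E * (s1 * p + (1 - s1) * q)).
  { assert (s1 * q <= s1 * (p * E)) by (apply Rmult_le_compat_l; lra). nra. }
  assert (Hk : 1 + (E - 1) * c <= E) by nra.
  apply Rle_trans with (q * (1 + (c - s1) * (E - 1))); [exact Hu|].
  apply Rmult_le_reg_l with E; [lra|].
  set (K := 1 + (E - 1) * c) in *.
  assert (HKv : K * (q * (E - s1 * (E - 1))) <= K * (E * (s1 * p + (1 - s1) * q)))
    by (apply Rmult_le_compat_l; [unfold K; apply Rplus_le_le_0_compat; [|apply Rmult_le_pos]; lra | exact Hv]).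
  assert (K * (s1 * (E - 1) * q) <= E * (s1 * (E - 1) * q))
    by (apply Rmult_le_compat_r; [apply Rmult_le_pos; [apply Rmult_le_pos|]|]; lra).
  unfold K in *. nra.
Qed.

Lemma Rpower_le_mul x y z s : 0 < x -> 0 < y -> 0 < z -> 0 <= s -> x <= y * z ->
  Rpower x s <= Rpower y s * Rpower z s.
Proof.
  intros Hx Hy Hz Hs Hxyz. rewrite Rpower_mult_distr by auto.
  apply Rle_Rpower_l; auto.
Qed.

Lemma contraction_constant_le K M c delta h : 0 < h <= 1 -> 0 < c < 1 ->
  exp (- ((K + (1 + h) / 2) + delta) * h) >= (1 + c) / 2 -> exp (M * h) >= 2 ->
  exp (K * h) * (1 + (exp (M * h) - 1) * c) <= exp ((M - delta) * h) * (1 - h / 2).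
Proof.
  intros Hh Hc Hexp HE. set (E := exp (M * h)) in *.
  set (B := exp ((1 + h) / 2 * h)).
  assert (HEc : 1 + (E - 1) * c <= E * ((1 + c) / 2)) by nra.
  assert (HB : 1 <= B * (1 - h / 2)).
  { pose proof (exp_ineq1_le ((1 + h) / 2 * h)) as Hineq. fold B in Hineq. nra. }
  assert (Hsplit : exp (K * h) * (E * exp (- ((K + (1 + h) / 2) + delta) * h))
                   = exp ((M - delta) * h) / B).
  { unfold E, B, Rdiv. rewrite <- exp_Ropp, <- !exp_plus. f_equal. ring. }
  assert (0 < exp (K * h)) by apply exp_pos.
  assert (0 < exp ((M - delta) * h)) by apply exp_pos.
  assert (0 < B) by apply exp_pos.
  apply Rle_trans with (exp (K * h) * (E * exp (- ((K + (1 + h) / 2) + delta) * h))).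
  - apply Rmult_le_compat_l; [lra|]. apply Rle_trans with (E * ((1 + c) / 2)); [exact HEc|].
    apply Rmult_le_compat_l; lra.
  - rewrite Hsplit. unfold Rdiv. apply Rmult_le_compat_l; [lra|].
    apply Rmult_le_reg_l with B; [lra|]. rewrite Rinv_r by lra. lra.
Qed.

Section Grid.

Variables (a b : R) (n : nat).
Hypotheses (Hab : a < b) (Hn : (1 <= n)%nat).

Local Notation h := (hstep a b n).
Local Notation node := (node a b n).

Lemma hstep_pos : 0 < h.
Proof. unfold hstep. apply Rdiv_lt_0_compat; [lra | apply lt_0_INR; lia]. Qed.

Lemma node_S k : node (S k) = node k + h.
Proof. unfold Defs.node. rewrite S_INR. ring. Qed.

Lemma node_0 : node 0 = a.
Proof. unfold Defs.node. simpl. ring. Qed.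

Lemma node_n : node n = b.
Proof.
  unfold Defs.node, hstep. assert (0 < INR n) by (apply lt_0_INR; lia).
  field. lra.
Qed.

Lemma le_node i j : (i <= j)%nat <-> node i <= node j.
Proof.
  pose proof hstep_pos. unfold Defs.node. split; intros Hij.
  - apply le_INR in Hij. nra.
  - destruct (le_lt_dec i j) as [|Hji]; [easy|]. apply lt_INR in Hji. nra.
Qed.

Lemma node_in_interval k : (k <= n)%nat -> a <= node k <= b.
Proof.
  intros Hk. pose proof node_0. pose proof node_n.
  assert (node 0 <= node k) by (apply le_node; lia).
  assert (node k <= node n) by (apply le_node; lia). lra.
Qed.

Lemma idx_spec u : a <= u <= b ->
  (idx a b n u < n)%nat /\ node (idx a b n u) <= u <= node (S (idx a b n u)).
Proof.
  intros Hu. pose proof hstep_pos as Hh. unfold idx.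
  set (r := (u - a) / h).
  assert (Hur : u - a = r * h) by (unfold r; field; lra).
  assert (Hrn : r <= INR n).
  { apply Rmult_le_reg_r with h; [exact Hh|].
    replace (INR n * h) with (b - a); [lra|].
    unfold hstep. field. apply not_0_INR. lia. }
  destruct (base_Int_part r) as [Hz1 Hz2].
  set (z := Int_part r) in *.
  assert (Hz : (0 <= z)%Z).
  { assert (0 <= r) by (apply Rdiv_le_0_compat; lra).
    assert (Hz : IZR (-1) < IZR z) by lra. apply lt_IZR in Hz. lia. }
  assert (Hm : INR (Z.to_nat z) = IZR z) by (rewrite INR_IZR_INZ, Z2Nat.id; auto).
  destruct (le_lt_dec (Z.to_nat z) (n - 1)) as [Hle | Hlt].
  - rewrite Nat.min_l by exact Hle. split; [lia|].
    unfold Defs.node. rewrite S_INR, Hm. nra.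
  - rewrite Nat.min_r by lia. split; [lia|].
    assert (Hub : u = b).
    { assert (Hnz : (n <= Z.to_nat z)%nat) by lia.
      apply le_INR in Hnz. rewrite Hm in Hnz.
      assert (r = INR n) by lra.
      rewrite <- node_n. unfold Defs.node. nra. }
    replace (S (n - 1)) with n by lia. rewrite node_n.
    split; [|lra]. assert (node (n - 1) <= node n) by (apply le_node; lia).
    rewrite node_n in *. lra.
Qed.

Lemma interp_on_cell (f : nat -> R) j u : (j < n)%nat -> node j <= u <= node (S j) ->
  Defs.interp a b n f u = (u - node j) / h * f (S j) + (1 - (u - node j) / h) * f j.
Proof.
  intros Hj Hju. pose proof hstep_pos as Hh.
  assert (Hu : a <= u <= b).
  { pose proof (node_in_interval j ltac:(lia)).
    pose proof (node_in_interval (S j) ltac:(lia)). lra. }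
  destruct (idx_spec u Hu) as [Hi Hiu].
  unfold Defs.interp. set (i := idx a b n u) in *.
  assert (Hcell : i = j \/ i = S j \/ j = S i).
  { assert (i <= S j)%nat by (apply le_node; lra).
    assert (j <= S i)%nat by (apply le_node; lra). lia. }
  destruct Hcell as [-> | [-> | ->]].
  - rewrite node_S. field. lra.
  - rewrite node_S in *.
    replace u with (node j + h) by lra. rewrite !node_S. field. lra.
  - rewrite node_S in *.
    replace u with (node i + h) by lra. field. lra.
Qed.

Lemma cell_coord_bounds j u : node j <= u <= node (S j) -> 0 <= (u - node j) / h <= 1.
Proof.
  intros Hu. pose proof hstep_pos. rewrite node_S in Hu. split.
  - apply Rdiv_le_0_compat; lra.
  - apply Rmult_le_reg_r with h; [lra|]. field_simplify; lra.
Qed.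

Lemma Qfun_bounds u : a <= u <= b -> 0 <= Qfun a b n u <= h ^ 2 / 4.
Proof.
  intros Hu. destruct (idx_spec u Hu) as [_ Hcell].
  unfold Qfun. set (j := idx a b n u) in *. rewrite node_S in *.
  pose proof (pow2_ge_0 (u - node j - h / 2)). split; nra.
Qed.

Lemma interp_near_node (f : nat -> R) m u : (m <= n)%nat -> a <= u <= b ->
  Rabs (u - node m) <= h ->
  exists m', (m' = S m \/ m = S m') /\ (m' <= n)%nat /\
    Defs.interp a b n f u =
    Rabs (u - node m) / h * f m' + (1 - Rabs (u - node m) / h) * f m.
Proof.
  intros Hm Hu Hd. pose proof hstep_pos. apply Rabs_le_between' in Hd.
  assert (Hside : ((m < n)%nat /\ node m <= u) \/ ((0 < m)%nat /\ u <= node m)).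
  { destruct (Rle_dec (node m) u) as [Hmu | Hum].
    - destruct (le_lt_dec n m) as [Hnm | Hmn]; [right | now left].
      assert (m = n) by lia. subst m. rewrite node_n. split; [lia | lra].
    - right. split; [|lra]. destruct m; [rewrite node_0 in Hum; lra | lia]. }
  destruct Hside as [[Hmn Hmu] | [Hm0 Hum]].
  - exists (S m). split; [now left|]. split; [lia|].
    rewrite Rabs_pos_eq by lra. apply interp_on_cell; [lia|]. rewrite node_S. lra.
  - destruct m as [|k]; [lia|]. exists k. split; [now right|]. split; [lia|].
    rewrite Rabs_left1 by lra. rewrite node_S in *.
    rewrite (interp_on_cell f k u) by (lia || rewrite node_S; lra).
    field. lra.
Qed.

(* The "weight" is the factor [1 + C_j Q / 2] of [betahat]. *)
Lemma weight_close Cj u v : Rabs Cj * h / 4 <= 1 -> a <= u <= b -> a <= v <= b ->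
  Rabs (/ 2 * Cj * Qfun a b n u - / 2 * Cj * Qfun a b n v) <= h / 2.
Proof.
  intros HCj Hu Hv. pose proof hstep_pos.
  pose proof (Qfun_bounds u Hu). pose proof (Qfun_bounds v Hv).
  replace (/ 2 * Cj * Qfun a b n u - / 2 * Cj * Qfun a b n v)
    with (/ 2 * (Cj * (Qfun a b n u - Qfun a b n v))) by ring.
  rewrite Rabs_mult, Rabs_mult, Rabs_inv, Rabs_pos_eq by lra.
  assert (Rabs (Qfun a b n u - Qfun a b n v) <= h ^ 2 / 4)
    by (apply Rabs_le_between; lra).
  assert (Rabs Cj * Rabs (Qfun a b n u - Qfun a b n v) <= Rabs Cj * (h ^ 2 / 4))
    by (apply Rmult_le_compat_l; auto using Rabs_pos).
  nra.
Qed.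

Lemma weight_lower Cj u : Rabs Cj * h / 4 <= 1 -> a <= u <= b ->
  1 - h / 2 <= 1 + / 2 * Cj * Qfun a b n u.
Proof.
  intros HCj Hu. pose proof hstep_pos. pose proof (Qfun_bounds u Hu).
  assert (- Cj <= Rabs Cj) by (rewrite <- Rabs_Ropp; apply Rle_abs).
  assert (- Cj * Qfun a b n u <= Rabs Cj * Qfun a b n u)
    by (apply Rmult_le_compat_r; lra).
  assert (Rabs Cj * Qfun a b n u <= Rabs Cj * (h ^ 2 / 4))
    by (apply Rmult_le_compat_l; [apply Rabs_pos | lra]).
  nra.
Qed.

Lemma weight_ratio Cj u v : Rabs Cj * h / 4 <= 1 -> h <= 1 ->
  a <= u <= b -> a <= v <= b ->
  (1 + / 2 * Cj * Qfun a b n u) * (1 - h / 2) <= 1 + / 2 * Cj * Qfun a b n v.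
Proof.
  intros HCj Hh1 Hu Hv.
  pose proof (weight_close Cj u v HCj Hu Hv) as Hclose. apply Rabs_le_between in Hclose.
  pose proof (weight_lower Cj v HCj Hv). nra.
Qed.

Section Cone.

Variable M : R.
Hypothesis HE : 1 < exp (M * h).
Local Notation E := (exp (M * h)).

Lemma inK_adjacent g k1 k2 : inK a b n M g -> (k1 <= n)%nat -> (k2 <= n)%nat ->
  (k1 = S k2 \/ k2 = S k1) -> g k1 <= g k2 * E.
Proof. intros Hg Hk1 Hk2 [-> | ->]; apply Hg; lia. Qed.

Lemma inK_nonneg g k : inK a b n M g -> (k <= n)%nat -> 0 <= g k.
Proof.
  intros Hg Hk.
  assert (Hnb : exists k', (k' <= n)%nat /\ (k' = S k \/ k = S k')).
  { destruct (le_lt_dec n k); [exists (n - 1)%nat | exists (S k)]; split; lia. }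
  destruct Hnb as [k' [Hk' Hadj]].
  assert (g k <= g k' * E) by (apply inK_adjacent; tauto).
  assert (g k' <= g k * E) by (apply inK_adjacent; tauto).
  assert (g k * (E * E - 1) >= 0) by nra.
  assert (0 < E * E - 1) by nra. nra.
Qed.

Lemma inK_le_pow g d k1 k2 : inK a b n M g -> (k1 <= n)%nat -> (k2 <= n)%nat ->
  (k1 <= k2 + d)%nat -> (k2 <= k1 + d)%nat -> g k1 <= g k2 * E ^ d.
Proof.
  intros Hg. revert k1. induction d as [|d IH]; intros k1 Hk1 Hk2 Hd1 Hd2.
  - replace k1 with k2 by lia. simpl. lra.
  - assert (Hpow : 1 <= E ^ S d) by (apply pow_R1_Rle; lra).
    assert (0 <= g k2) by (apply (inK_nonneg g); auto).
    destruct (Nat.eq_dec k1 k2) as [-> | Hne]; [nra|].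
    set (k' := if le_lt_dec k1 k2 then S k1 else (k1 - 1)%nat).
    assert (Hk' : (k' <= n)%nat /\ (k' = S k1 \/ k1 = S k') /\
                  (k' <= k2 + d)%nat /\ (k2 <= k' + d)%nat)
      by (unfold k'; destruct le_lt_dec; lia).
    destruct Hk' as [Hk'n [Hadj [Hd1' Hd2']]].
    assert (g k1 <= g k' * E) by (apply inK_adjacent; auto; lia).
    assert (g k' <= g k2 * E ^ d) by (apply IH; auto).
    simpl. nra.
Qed.

Lemma inKstar_pos g k : inKstar a b n M g -> (k <= n)%nat -> 0 < g k.
Proof.
  intros [Hg [k0 [Hk0 Hnz]]] Hk.
  assert (g k0 <= g k * E ^ n) by (apply inK_le_pow; auto; lia).
  assert (0 <= g k0) by (apply (inK_nonneg g); auto).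
  assert (0 <= g k) by (apply (inK_nonneg g); auto).
  destruct (Req_dec (g k) 0) as [Hz | Hz]; [|lra].
  rewrite Hz, Rmult_0_l in *. exfalso. apply Hnz. lra.
Qed.

Variable f : nat -> R.
Hypotheses (Hf : inK a b n M f) (Hfpos : forall k, (k <= n)%nat -> 0 < f k).

Lemma interp_pos u : a <= u <= b -> 0 < Defs.interp a b n f u.
Proof.
  intros Hu. destruct (idx_spec u Hu) as [Hj Hcell].
  rewrite (interp_on_cell f _ u Hj Hcell).
  pose proof (cell_coord_bounds _ _ Hcell).
  pose proof (Hfpos (idx a b n u) ltac:(lia)). pose proof (Hfpos (S (idx a b n u)) Hj).
  set (t := (u - node (idx a b n u)) / h) in *. nra.
Qed.

Lemma interp_le_pow u k : a <= u <= b -> (k <= n)%nat ->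
  Defs.interp a b n f u <= f k * E ^ n.
Proof.
  intros Hu Hk. destruct (idx_spec u Hu) as [Hj Hcell].
  rewrite (interp_on_cell f _ u Hj Hcell).
  pose proof (cell_coord_bounds _ _ Hcell).
  assert (f (idx a b n u) <= f k * E ^ n) by (apply inK_le_pow; auto; lia).
  assert (f (S (idx a b n u)) <= f k * E ^ n) by (apply inK_le_pow; auto; lia).
  set (t := (u - node (idx a b n u)) / h) in *. nra.
Qed.

Lemma interp_ratio_across_node c m u v : c < 1 -> (m <= n)%nat ->
  a <= u <= b -> a <= v <= b -> Rabs (u - node m) + Rabs (v - node m) <= c * h ->
  Defs.interp a b n f u <= (1 + (E - 1) * c) * Defs.interp a b n f v.
Proof.
  intros Hc Hm Hu Hv Hd. pose proof hstep_pos.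
  pose proof (Rabs_pos (u - node m)). pose proof (Rabs_pos (v - node m)).
  destruct (interp_near_node f m u Hm Hu ltac:(nra)) as [mu [Hmu [Hmun ->]]].
  destruct (interp_near_node f m v Hm Hv ltac:(nra)) as [mv [Hmv [Hmvn ->]]].
  apply lerp_ratio_across_node; try lra.
  - apply Rlt_le, Hfpos, Hmvn.
  - apply Hfpos, Hm.
  - apply inK_adjacent; tauto.
  - apply inK_adjacent; tauto.
  - split; [apply Rdiv_le_0_compat; lra|].
    apply Rmult_le_reg_r with h; [lra|]. field_simplify; nra.
  - apply Rdiv_le_0_compat; lra.
  - apply Rmult_le_reg_r with h; [lra|]. field_simplify; lra.
Qed.

(* Either [u] and [v] share the cell of [v], or, as [|u - v| < h], a single node separates them. *)
Lemma interp_ratio c u v : 0 <= c < 1 -> a <= u <= b -> a <= v <= b ->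
  Rabs (u - v) <= c * h ->
  Defs.interp a b n f u <= (1 + (E - 1) * c) * Defs.interp a b n f v.
Proof.
  intros Hc Hu Hv Huv. pose proof hstep_pos.
  destruct (idx_spec v Hv) as [Hj Hvcell]. set (j := idx a b n v) in *.
  apply Rabs_le_between' in Huv.
  destruct (Rle_dec (node j) u) as [Hju | Huj]; [destruct (Rle_dec u (node (S j))) as [Huj | Hju']|].
  - rewrite (interp_on_cell f j u), (interp_on_cell f j v) by auto.
    apply lerp_ratio_same_cell; auto using cell_coord_bounds with arith; try lra.
    + apply Hf; exact Hj.
    + apply Hf; exact Hj.
    + replace ((u - node j) / h - (v - node j) / h) with ((u - v) / h) by (field; lra).
      apply Rabs_le_between. split;
        (apply Rmult_le_reg_r with h; [lra|]); field_simplify; lra.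
  - apply (interp_ratio_across_node c (S j)); try lra; [exact Hj|].
    rewrite Rabs_pos_eq, Rabs_left1 by lra. lra.
  - apply (interp_ratio_across_node c j); try lra; [lia|].
    rewrite Rabs_left, Rabs_pos_eq by lra. lra.
Qed.

End Cone.

End Grid.

Section Transfer.

Variables (a b : R) (n : nat) (s c M0 C M delta : R).
Hypotheses (Hab : a < b) (Hn : (1 <= n)%nat) (Hs : 0 <= s) (Hc : 0 < c < 1) (HM0 : 0 < M0)
  (Hh1 : hstep a b n <= 1) (HCh : C * hstep a b n / 4 <= 1) (HE : exp (M * hstep a b n) >= 2).

Local Notation h := (hstep a b n).
Local Notation node := (node a b n).

Variables (th : nat -> R -> R) (Cs : nat -> R) (beta : nat -> nat -> R) (j : nat).
Hypotheses (Hmaps : forall x, a <= x <= b -> a <= th j x <= b)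
  (Hbeta : inKstar a b n M0 (beta j)) (HCj : Rabs (Cs j) <= C).

Variable f : nat -> R.
Hypothesis Hf : inKstar a b n M f.

Let HCjh : Rabs (Cs j) * h / 4 <= 1.
Proof. clear -Hab Hn HCh HCj. pose proof (hstep_pos a b n Hab Hn). nra. Qed.

Let HM0E : 1 < exp (M0 * h).
Proof.
  clear -Hab Hn HM0.
  rewrite <- exp_0. apply exp_increasing.
  pose proof (hstep_pos a b n Hab Hn). nra.
Qed.

Let HME : 1 < exp (M * h).
Proof. clear -HE. lra. Qed.

Let Hfpos k : (k <= n)%nat -> 0 < f k.
Proof. apply (inKstar_pos a b n Hn M HME f k Hf). Qed.

Let Hth k : (k <= n)%nat -> a <= th j (node k) <= b.
Proof. intros Hk. apply Hmaps, node_in_interval; auto. Qed.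

Let Hweight_pos k : (k <= n)%nat -> 0 < 1 + / 2 * Cs j * Qfun a b n (th j (node k)).
Proof.
  clear -Hab Hn HCjh Hh1 Hth.
  intros Hk. pose proof (weight_lower a b n Hab Hn (Cs j) _ HCjh (Hth k Hk)). lra.
Qed.

Lemma Lterm_pos k : (k <= n)%nat -> 0 < Lterm a b n s th Cs beta f j k.
Proof.
  intros Hk. unfold Lterm, betahat.
  pose proof (Hweight_pos k Hk).
  pose proof (interp_pos a b n Hab Hn f Hfpos _ (Hth k Hk)).
  assert (0 < Rpower (beta j k) s) by apply exp_pos.
  apply Rmult_lt_0_compat; [apply Rmult_lt_0_compat|]; lra.
Qed.

Lemma Lterm_adjacent_ratio k1 k2 :
  (forall x y, a <= x <= b -> a <= y <= b -> Rabs (th j x - th j y) <= c * Rabs (x - y)) ->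
  exp (- ((s * M0 + (1 + h) / 2) + delta) * h) >= (1 + c) / 2 ->
  (k1 <= n)%nat -> (k2 <= n)%nat -> (k1 = S k2 \/ k2 = S k1) ->
  Lterm a b n s th Cs beta f j k1 <= exp ((M - delta) * h) * Lterm a b n s th Cs beta f j k2.
Proof.
  intros Hlip Hexp Hk1 Hk2 Hadj. pose proof (hstep_pos a b n Hab Hn) as Hh.
  unfold Lterm, betahat.
  set (P1 := 1 + / 2 * Cs j * Qfun a b n (th j (node k1))).
  set (P2 := 1 + / 2 * Cs j * Qfun a b n (th j (node k2))).
  set (R1 := Rpower (beta j k1) s). set (R2 := Rpower (beta j k2) s).
  set (F1 := Defs.interp a b n f (th j (node k1))).
  set (F2 := Defs.interp a b n f (th j (node k2))).
  assert (HP : P1 * (1 - h / 2) <= P2) by (apply weight_ratio; auto).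
  assert (HR : R1 <= R2 * exp (s * M0 * h)).
  { replace (exp (s * M0 * h)) with (Rpower (exp (M0 * h)) s)
      by (unfold Rpower; rewrite ln_exp; f_equal; ring).
    apply Rpower_le_mul; auto using exp_pos.
    - apply (inKstar_pos a b n Hn M0); auto.
    - apply (inKstar_pos a b n Hn M0); auto.
    - apply (inK_adjacent a b n Hn M0); auto. apply Hbeta. }
  assert (HF : F1 <= (1 + (exp (M * h) - 1) * c) * F2).
  { apply (interp_ratio a b n Hab Hn M HME f (proj1 Hf) Hfpos); auto; [lra|].
    eapply Rle_trans; [apply Hlip; apply node_in_interval; auto|].
    apply Rmult_le_compat_l; [lra|].
    destruct Hadj as [-> | ->]; rewrite node_S;
      [rewrite Rabs_pos_eq | rewrite Rabs_left1]; lra. }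
  pose proof (contraction_constant_le (s * M0) M c delta h ltac:(lra) Hc Hexp HE) as HK.
  assert (0 < P1 /\ 0 < P2) by (split; apply Hweight_pos; auto).
  assert (0 < R1 /\ 0 < R2) by (split; apply exp_pos).
  assert (0 < F2) by (apply (interp_pos a b n Hab Hn f Hfpos), Hth; auto).
  assert (0 < F1) by (apply (interp_pos a b n Hab Hn f Hfpos), Hth; auto).
  apply Rmult_le_reg_r with (1 - h / 2); [lra|].
  apply Rle_trans with (P2 * (R2 * exp (s * M0 * h)) * ((1 + (exp (M * h) - 1) * c) * F2)).
  - replace (P1 * R1 * F1 * (1 - h / 2)) with (P1 * (1 - h / 2) * R1 * F1) by ring.
    assert (0 <= P1 * (1 - h / 2)) by (apply Rmult_le_pos; lra).
    apply Rmult_le_compat; [apply Rmult_le_pos; lra | lra | | exact HF].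
    apply Rmult_le_compat; lra.
  - replace (P2 * (R2 * exp (s * M0 * h)) * ((1 + (exp (M * h) - 1) * c) * F2))
      with (P2 * R2 * F2 * (exp (s * M0 * h) * (1 + (exp (M * h) - 1) * c))) by ring.
    replace (exp ((M - delta) * h) * (P2 * R2 * F2) * (1 - h / 2))
      with (P2 * R2 * F2 * (exp ((M - delta) * h) * (1 - h / 2))) by ring.
    apply Rmult_le_compat_l; [|exact HK].
    apply Rmult_le_pos; [apply Rmult_le_pos|]; lra.
Qed.

Lemma Lterm_le_betahat k k0 : (k <= n)%nat -> (k0 <= n)%nat ->
  Lterm a b n s th Cs beta f j k <=
  (2 * Rpower (exp (M0 * h) ^ n) s * (f 0%nat * exp (M * h) ^ n)) *
  betahat a b n s (th j) (Cs j) (beta j) k0.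
Proof.
  intros Hk Hk0. unfold Lterm, betahat.
  set (P := 1 + / 2 * Cs j * Qfun a b n (th j (node k))).
  set (P0 := 1 + / 2 * Cs j * Qfun a b n (th j (node k0))).
  set (W := Rpower (exp (M0 * h) ^ n) s).
  assert (HP : P * (1 - h / 2) <= P0) by (apply weight_ratio; auto).
  assert (0 < P /\ 0 < P0) by (split; apply Hweight_pos; auto).
  assert (HP2 : P <= 2 * P0) by nra.
  assert (HR : Rpower (beta j k) s <= Rpower (beta j k0) s * W).
  { assert (0 < exp (M0 * h) ^ n) by (apply pow_lt, exp_pos).
    apply Rpower_le_mul; auto.
    - apply (inKstar_pos a b n Hn M0); auto.
    - apply (inKstar_pos a b n Hn M0); auto.
    - apply (inK_le_pow a b n Hn M0); auto; [apply Hbeta | lia | lia]. }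
  assert (HF : Defs.interp a b n f (th j (node k)) <= f 0%nat * exp (M * h) ^ n)
    by (apply (interp_le_pow a b n Hab Hn M HME f (proj1 Hf)); auto; lia).
  assert (0 < Rpower (beta j k) s) by apply exp_pos.
  assert (0 < Defs.interp a b n f (th j (node k)))
    by (apply (interp_pos a b n Hab Hn f Hfpos), Hth; auto).
  apply Rle_trans with ((2 * P0) * (Rpower (beta j k0) s * W) * (f 0%nat * exp (M * h) ^ n)).
  - apply Rmult_le_compat; [apply Rmult_le_pos; lra | lra | | exact HF].
    apply Rmult_le_compat; lra.
  - apply Req_le. ring.
Qed.
End Transfer.

Definition range_sum (N : option nat) (u : nat -> R) : R :=
  match N with
  | Some m => sum_n_m u 1 m
  | None => Series (fun j => u (S j))
  end.

Lemma Ls_range_sum a b n s N th Cs beta f k :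
  Ls a b n s N th Cs beta f k = range_sum N (fun j => Lterm a b n s th Cs beta f j k).
Proof. reflexivity. Qed.

Lemma sum_n_m_le_loc (u v : nat -> R) p m : (forall j, (p <= j <= m)%nat -> u j <= v j) ->
  sum_n_m u p m <= sum_n_m v p m.
Proof.
  intros Huv. rewrite (sum_n_m_ext_loc u (fun j => Rmin (u j) (v j)))
    by (intros j Hj; rewrite Rmin_left; auto).
  apply sum_n_m_le. intros j. apply Rmin_r.
Qed.

Lemma Series_nonneg (u : nat -> R) : (forall j, 0 <= u j) -> ex_series u -> 0 <= Series u.
Proof.
  intros Hu Hex. rewrite <- (Rmult_0_l (Series u)), <- Series_scal_l.
  apply Series_le; auto. intros j. rewrite Rmult_0_l. auto with real.
Qed.

Lemma ex_series_le_scal (u v : nat -> R) K : (forall j, 0 <= u j <= K * v j) ->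
  ex_series v -> ex_series u.
Proof.
  intros Huv Hv. apply (@ex_series_le R_AbsRing R_CompleteNormedModule) with (b := fun j => K * v j).
  - intros j. change (Rabs (u j) <= K * v j). rewrite Rabs_pos_eq; apply Huv.
  - apply (@ex_series_scal_l R_AbsRing R_NormedModule), Hv.
Qed.

Lemma range_sum_scal_l N G u : range_sum N (fun j => G * u j) = G * range_sum N u.
Proof.
  destruct N as [m|]; simpl.
  - apply (sum_n_m_mult_l G u).
  - apply Series_scal_l.
Qed.

Lemma range_sum_le N (u v : nat -> R) : (forall j, in_range N j -> 0 <= u j <= v j) ->
  (N = None -> ex_series (fun j => v (S j))) -> range_sum N u <= range_sum N v.
Proof.
  intros Huv Hv. destruct N as [m|]; simpl.
  - apply sum_n_m_le_loc. intros j Hj. apply Huv. split; lia.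
  - apply Series_le; auto. intros j. apply Huv. split; [lia | exact I].
Qed.

Lemma range_sum_pos N u : match N with Some m => (1 <= m)%nat | None => True end ->
  (forall j, in_range N j -> 0 < u j) -> (N = None -> ex_series (fun j => u (S j))) ->
  0 < range_sum N u.
Proof.
  intros HN Hu Hex. destruct N as [m|]; simpl.
  - rewrite sum_Sn_m by exact HN. change (plus ?x ?y) with (x + y).
    assert (0 <= sum_n_m u 2 m).
    { replace 0 with (sum_n_m (fun _ => 0) 2 m) by apply (sum_n_m_const_zero (G := R_AbelianMonoid)).
      apply sum_n_m_le_loc.
      intros j Hj. apply Rlt_le, Hu. split; lia. }
    assert (0 < u 1%nat) by (apply Hu; split; lia). lra.
  - rewrite Series_incr_1 by auto.
    assert (0 < u 1%nat) by (apply Hu; split; [lia | exact I]).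
    assert (0 <= Series (fun k => u (S (S k)))).
    { apply Series_nonneg; [intros j; apply Rlt_le, Hu; split; [lia | exact I]|].
      apply (ex_series_incr_1 (fun k => u (S k))); auto. }
    lra.
Qed.
Theorem theorem8p3 (a b : R) (n : nat) (s delta c M0 C : R) (N : option nat)
  (th : nat -> R -> R) (beta : nat -> nat -> R) (Cs : nat -> R) (M : R) :
  a < b -> (2 <= n)%nat ->
  0 <= s -> 0 < delta -> 0 < c < 1 -> 0 < M0 -> 0 <= C ->
  match N with Some m => (1 <= m)%nat | None => True end ->
  (forall j, in_range N j ->
     (forall x, a <= x <= b -> a <= th j x <= b) /\
     (forall x y, a <= x <= b -> a <= y <= b ->
        Rabs (th j x - th j y) <= c * Rabs (x - y))) ->
  (forall j, in_range N j -> inKstar a b n M0 (beta j)) ->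
  (forall j, in_range N j -> Rabs (Cs j) <= C) ->
  (N = None -> exists k0 : nat, (k0 <= n)%nat /\
     ex_series (fun j => betahat a b n s (th (S j)) (Cs (S j)) (beta (S j)) k0)) ->
  hstep a b n <= 1 ->
  C * hstep a b n / 4 <= 1 ->
  exp (- ((s * M0 + (1 + hstep a b n) / 2) + delta) * hstep a b n) >= (1 + c) / 2 ->
  exp (M * hstep a b n) >= 2 ->
  forall f : nat -> R, inKstar a b n M f ->
    (N = None -> forall k : nat, (k <= n)%nat ->
       ex_series (fun j => Lterm a b n s th Cs beta f (S j) k)) /\
    inKstar a b n (M - delta) (Ls a b n s N th Cs beta f).
Proof.
  intros Hab Hn2 Hs _ Hc HM0 _ HNm Hth Hb HCs Hsum Hh1 HCh Hexp HE f Hf.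
  assert (Hn : (1 <= n)%nat) by lia.
  set (L := Lterm a b n s th Cs beta f).
  set (G := exp ((M - delta) * hstep a b n)).
  assert (Hpos : forall j k, in_range N j -> (k <= n)%nat -> 0 < L j k).
  { intros j k Hj Hk. destruct (Hth j Hj) as [Hmaps _].
    eapply Lterm_pos; eauto. }
  assert (Hratio : forall j k1 k2, in_range N j -> (k1 <= n)%nat -> (k2 <= n)%nat ->
            (k1 = S k2 \/ k2 = S k1) -> L j k1 <= G * L j k2).
  { intros j k1 k2 Hj Hk1 Hk2 Hadj. destruct (Hth j Hj) as [Hmaps Hlip].
    eapply Lterm_adjacent_ratio; eauto. }
  assert (Hser : N = None -> forall k, (k <= n)%nat -> ex_series (fun j => L (S j) k)).
  { intros HN k Hk. destruct (Hsum HN) as [k0 [Hk0 Hex]]. subst N.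
    eapply ex_series_le_scal; [|exact Hex]. intros j.
    assert (Hj : in_range None (S j)) by (split; [lia | exact I]).
    destruct (Hth (S j) Hj) as [Hmaps _].
    split; [apply Rlt_le, Hpos; auto | eapply Lterm_le_betahat; eauto]. }
  split; [exact Hser|]. split.
  - intros i Hi. rewrite !Ls_range_sum. fold L.
    rewrite !(Rmult_comm _ G), <- !range_sum_scal_l.
    split; apply range_sum_le.
    all: try (intros j Hj; split; [apply Rlt_le, Hpos | apply Hratio]; auto; lia).
    all: intros HN; apply (@ex_series_scal_l R_AbsRing R_NormedModule G (fun j => L (S j) _)).
    all: apply Hser; auto; lia.
  - exists 0%nat. split; [lia|]. apply Rgt_not_eq. rewrite Ls_range_sum.
    apply range_sum_pos; auto.
    + intros j Hj. apply Hpos; auto; lia.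
    + intros HN. apply Hser; auto; lia.
Qed.
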